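(* Let $(X,d)$ be a complete metric space and let $\{T_i\}_{i\in\mathbb{N}}$ be a sequence of continuous maps $T_i:X\to X$ having a compact invariant set $C\subseteq X$ (i.e., $T_i(C)\subseteq C$ for all $i$). Assume that $T_i$ converges uniformly on $C$ to a map $T:X\to X$ which is Lipschitz with Lipschitz constant $\mu<1$, and let $p$ be the fixed point of $T$. Then for every $x\in C$, with $\Phi_k=T_k\circ T_{k-1}\circ\cdots\circ T_1$, $$\lim_{k\to\infty} d\big(\Phi_k(x),p\big)=0.$$
   Context: Uniform convergence on $C$ means $\sup_{x\in C} d(T_i(x),T(x))\to 0$ as $i\to\infty$. *)

From Stdlib Require Import Reals List.
Open Scope R_scope.

Definition is_metric {X : Type} (d : X -> X -> R) : Prop :=
  (forall x y, 0 <= d x y) /\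
  (forall x y, d x y = 0 <-> x = y) /\
  (forall x y, d x y = d y x) /\
  (forall x y z, d x z <= d x y + d y z).

Definition cauchy_seq {X : Type} (d : X -> X -> R) (u : nat -> X) : Prop :=
  forall eps, 0 < eps -> exists N, forall m n, (N <= m)%nat -> (N <= n)%nat -> d (u m) (u n) < eps.

Definition converges_to {X : Type} (d : X -> X -> R) (u : nat -> X) (l : X) : Prop :=
  forall eps, 0 < eps -> exists N, forall n, (N <= n)%nat -> d (u n) l < eps.

Definition complete_metric {X : Type} (d : X -> X -> R) : Prop :=
  forall u, cauchy_seq d u -> exists l, converges_to d u l.

Definition d_continuous {X : Type} (d : X -> X -> R) (f : X -> X) : Prop :=
  forall x eps, 0 < eps -> exists delta, 0 < delta /\
    forall y, d x y < delta -> d (f x) (f y) < eps.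

Definition d_open {X : Type} (d : X -> X -> R) (U : X -> Prop) : Prop :=
  forall x, U x -> exists r, 0 < r /\ forall y, d x y < r -> U y.

Definition d_compact {X : Type} (d : X -> X -> R) (C : X -> Prop) : Prop :=
  forall (I : Type) (U : I -> X -> Prop),
    (forall i, d_open d (U i)) ->
    (forall x, C x -> exists i, U i x) ->
    exists l : list I, forall x, C x -> exists i, In i l /\ U i x.

Definition lipschitz_with {X : Type} (d : X -> X -> R) (mu : R) (f : X -> X) : Prop :=
  0 <= mu /\ forall x y, d (f x) (f y) <= mu * d x y.

Definition unif_conv_on {X : Type} (d : X -> X -> R) (C : X -> Prop)
  (Ts : nat -> X -> X) (T : X -> X) : Prop :=
  forall eps, 0 < eps -> exists N, forall i, (N <= i)%nat ->
    forall x, C x -> d (Ts i x) (T x) <= eps.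

Fixpoint Phi {X : Type} (Ts : nat -> X -> X) (k : nat) (x : X) : X :=
  match k with
  | O => x
  | S k' => Ts (S k') (Phi Ts k' x)
  end.

(** Writing [a_k = d (Phi_k x) p], the triangle inequality through
    [T (Phi_k x)] and [T p = p] give [a_(k+1) <= mu a_k + e] as soon as
    [d (T_(k+1) y) (T y) <= e] on [C], which holds for large [k] by uniform
    convergence since every [Phi_k x] stays in [C].  Unrolling this recursion,
    [a_(N+m) <= mu^m a_N + e / (1 - mu)], so [a_k] is eventually below any
    positive bound. *)
From Stdlib Require Import Reals List Lra Lia.
Open Scope R_scope.

Lemma Phi_invariant (X : Type) (Ts : nat -> X -> X) (C : X -> Prop) :
  (forall i x, C x -> C (Ts i x)) -> forall x, C x -> forall k, C (Phi Ts k x).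
Proof. intros Hinv x Hx k; induction k; simpl; auto. Qed.

Lemma dist_fixpoint_le_perturbed (X : Type) (d : X -> X -> R) (T f : X -> X)
    (mu e : R) (p y : X) :
  is_metric d -> lipschitz_with d mu T -> T p = p -> d (f y) (T y) <= e ->
  d (f y) p <= mu * d y p + e.
Proof.
  intros (_ & _ & _ & Htri) (_ & Hlip) Hp Hfy.
  pose proof (Htri (f y) (T y) p).
  pose proof (Hlip y p) as HT; rewrite Hp in HT.
  lra.
Qed.

Section PerturbedContraction.

Variables (a : nat -> R) (mu : R).
Hypotheses (Hmu0 : 0 <= mu) (Hmu1 : mu < 1).

Lemma perturbed_contraction_unroll (e : R) (N : nat) :
  0 <= e -> (forall k, (N <= k)%nat -> a (S k) <= mu * a k + e) ->
  forall m, a (m + N)%nat <= mu ^ m * a N + e / (1 - mu).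
Proof.
  intros He Hstep.
  assert (Hfrac : e / (1 - mu) = mu * (e / (1 - mu)) + e)
    by (field; lra).
  assert (0 <= e / (1 - mu)) by (unfold Rdiv; apply Rmult_le_pos; [|apply Rlt_le, Rinv_0_lt_compat]; lra).
  induction m as [|m IH]; simpl.
  - lra.
  - pose proof (Hstep (m + N)%nat ltac:(lia)).
    pose proof (Rmult_le_compat_l mu _ _ Hmu0 IH).
    lra.
Qed.

Lemma perturbed_contraction_vanishes :
  (forall n, 0 <= a n) ->
  (forall e, 0 < e -> exists N, forall k, (N <= k)%nat -> a (S k) <= mu * a k + e) ->
  forall eps, 0 < eps -> exists N, forall n, (N <= n)%nat -> a n < eps.
Proof.
  intros Hpos Hrec eps Heps.
  assert (He : 0 < eps * (1 - mu) / 2)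
    by (apply Rmult_lt_0_compat; [apply Rmult_lt_0_compat|]; lra).
  destruct (Hrec _ He) as [N HN].
  pose proof (perturbed_contraction_unroll _ N (Rlt_le _ _ He) HN) as Hbound.
  replace (eps * (1 - mu) / 2 / (1 - mu)) with (eps / 2) in Hbound
    by (field; lra).
  pose proof (Hpos N).
  destruct (pow_lt_1_zero mu ltac:(apply Rabs_def1; lra) (eps / 2 / (a N + 1)))
    as [M HM]; [apply Rdiv_lt_0_compat; lra|].
  exists (M + N)%nat; intros n Hn.
  replace n with ((n - N) + N)%nat by lia.
  pose proof (Hbound (n - N)%nat).
  assert (Hpow : 0 <= mu ^ (n - N)) by (apply pow_le; lra).
  pose proof (HM (n - N)%nat ltac:(lia)) as Hsmall.
  rewrite Rabs_right in Hsmall by lra.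
  apply Rmult_lt_compat_r with (r := a N + 1) in Hsmall; [|lra].
  unfold Rdiv in Hsmall; rewrite Rmult_assoc, Rinv_l in Hsmall by lra.
  nra.
Qed.

End PerturbedContraction.

Theorem mainTheorem3 (X : Type) (d : X -> X -> R)
  (Hmet : is_metric d) (Hcomp : complete_metric d)
  (Ts : nat -> X -> X) (Hcont : forall i, d_continuous d (Ts i))
  (C : X -> Prop) (HC : d_compact d C)
  (Hinv : forall i x, C x -> C (Ts i x))
  (T : X -> X) (mu : R) (Hlip : lipschitz_with d mu T) (Hmu : mu < 1)
  (Hunif : unif_conv_on d C Ts T)
  (p : X) (Hp : T p = p) :
  forall x, C x -> converges_to d (fun k => Phi Ts k x) p.
Proof.
  intros x Hx; unfold converges_to.
  apply (perturbed_contraction_vanishes (fun k => d (Phi Ts k x) p) mu);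
    [apply Hlip | exact Hmu | intro; apply Hmet |].
  intros e He.
  destruct (Hunif e He) as [N HN].
  exists N; intros k Hk; simpl.
  apply dist_fixpoint_le_perturbed with (T := T); auto.
  apply HN; [lia | apply (Phi_invariant _ _ _ Hinv _ Hx)].
Qed.
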